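(* Let $n\ge2$, $m=n-1$, $c\in\mathbb{R}^{m^2}$, and let $\overline{Q}_1$ be the polytope defined by constraints (1)–(8): (1) $\sum_{r=1}^m w_{ir}=1$, $i=1,\dots,m$; (2) $\sum_{i=1}^m w_{ir}=1$, $r=1,\dots,m$; (3) $w_{ir}\ge0$; (4) $y_{0,i}=w_{i,1}$; (5) $y_{i,0}=w_{i,m}$; (6) $w_{ir}+w_{j,r+1}-y_{ij}\le1$ for $i\ne j\in\{1,\dots,m\}$, $r\le m-1$; (7) $\sum_{i=1}^m\sum_{j\ne i,j=1}^m y_{ij}=m-1$; (8) $y_{ij}\ge0$ for all distinct $i,j\in\{0,\dots,m\}$. Then $(w^*,y^* )$ is an optimal solution of the problem $\min\{\sum_{i,r}c_{ir}w_{ir}:(w,y)\in\overline{Q}_1\}$ if and only if $(w^*,y^* )\in\overline{Q}_1$ and $w^*$ is an optimal solution of $\min\{c^t w: w\in\mathcal{A}_n\}$.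
   Context: $\mathcal{A}_n\subseteq\mathbb{R}^{m^2}$ is the linear assignment (Birkhoff) polytope, the set of $w$ satisfying (1)–(3). $y$ is indexed by ordered pairs of distinct elements of $\{0,1,\dots,m\}$. *)

From HB Require Import structures.
From mathcomp Require Import all_boot all_order all_algebra.
Set Implicit Arguments. Unset Strict Implicit. Unset Printing Implicit Defensive.
Import Order.TTheory GRing.Theory Num.Theory.
Local Open Scope ring_scope.

(* Indexing conventions (m = n - 1):
   - w : 'M[R]_m, entry w i r (i, r : 'I_m, 0-based) is the paper's w_{i+1, r+1}.
   - y : 'M[R]_m.+1, indices 'I_m.+1 = {0,...,m}; index 0 is the paper's 0 and
     the w-index i : 'I_m corresponds to node  lift ord0 i  (value i+1).
     Diagonal entries y a a are not variables of the paper; they are unconstrained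
     and do not appear in the objective. *)

Definition node (m : nat) (i : 'I_m) : 'I_m.+1 := lift ord0 i.

Section Polytopes.
Variable R : realFieldType.
Variable m : nat.

Definition in_assign (w : 'M[R]_m) : Prop :=
  [/\ (forall i : 'I_m, \sum_(r < m) w i r = 1),
      (forall r : 'I_m, \sum_(i < m) w i r = 1) &
      (forall i r : 'I_m, 0 <= w i r)].

Definition in_Q1 (w : 'M[R]_m) (y : 'M[R]_m.+1) : Prop :=
  in_assign w /\ [/\
      (forall i r : 'I_m, val r = 0%N -> y ord0 (node i) = w i r),
      (forall i r : 'I_m, val r = m.-1 -> y (node i) ord0 = w i r),
      (forall i j r s : 'I_m, i != j -> val s = (val r).+1 ->
          w i r + w j s - y (node i) (node j) <= 1),
      (\sum_(i < m) \sum_(j < m | j != i) y (node i) (node j) = (m.-1)%:R) &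
      (forall a b : 'I_m.+1, a != b -> 0 <= y a b)].

Definition cost (c w : 'M[R]_m) : R := \sum_(i < m) \sum_(r < m) c i r * w i r.

Definition optimal_Q1 (c w : 'M[R]_m) (y : 'M[R]_m.+1) : Prop :=
  in_Q1 w y /\ forall w' y', in_Q1 w' y' -> cost c w <= cost c w'.

Definition optimal_assign (c w : 'M[R]_m) : Prop :=
  in_assign w /\ forall w', in_assign w' -> cost c w <= cost c w'.

End Polytopes.

From HB Require Import structures.
From mathcomp Require Import all_boot all_order all_algebra.
From mathcomp Require Import lra.
Import Order.TTheory GRing.Theory Num.Theory.
Local Open Scope ring_scope.

(* Constraints (1)-(3) of Q1 are exactly those of the assignment
   polytope and the objective only involves w, so both optimality notions
   coincide once we know that the projection of Q1 onto the w-coordinates is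
   the whole assignment polytope: every w in A_n extends to some (w, y) in Q1.
   For w in A_n with m = k+1 we take
     y_{0,j} = w_{j,1},   y_{i,0} = w_{i,m},
     y_{ij}  = P_{ij} := sum_{r<m} w_{i,r} w_{j,r+1}     (i <> j),
   where P_{ij} is the "succession mass" from i to j.  Then (6) follows from
   a + b - 1 <= a b for a, b in [0, 1], and by the column sums
   sum_{i} sum_{j<>i} P_{ij} = (m - 1) - D with D = sum_i P_{ii} >= 0; adding
   D to a single off-diagonal entry restores (7) while keeping (6) and (8). *)

(* Two numbers of [0, 1] satisfy a + b - 1 <= a b, i.e. (1 - a)(1 - b) >= 0;
   this is the linearisation inequality behind constraint (6). *)
Lemma sum_sub1_le_mul {R : realFieldType} {a b : R} :
  a <= 1 -> b <= 1 -> a + b - 1 <= a * b.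
Proof.
move=> a1 b1; have : 0 <= (1 - a) * (1 - b) by apply: mulr_ge0; rewrite subr_ge0.
rewrite mulrBl !mulrBr !mul1r mulr1 => h; lra.
Qed.

Lemma assign_entry_le1 {R : realFieldType} {m : nat} {w : 'M[R]_m} i r :
  in_assign w -> w i r <= 1.
Proof.
case=> hrow _ hpos; rewrite -(hrow i) (bigD1 r) //= lerDl.
by apply: sumr_ge0 => s _; apply: hpos.
Qed.

Lemma sum_offdiag_single (R : nmodType) (T : finType) (a b : T) (x : R) :
  \sum_(i : T) \sum_(j : T | j != i) (if (i == a) && (j == b) then x else 0)
  = if a != b then x else 0.
Proof.
rewrite (bigD1 a) //= eqxx [X in _ + X]big1 ?addr0; last first.
  by move=> i /negbTE ia; apply: big1 => j _; rewrite ia.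
case: (eqVneq a b) => [<-|ba] /=; first by apply: big1 => j /negbTE ->.
by rewrite (bigD1 b) 1?eq_sym //= eqxx big1 ?addr0 // => j /andP[_ /negbTE ->].
Qed.

Section Extension.
Context {R : realFieldType} {k : nat} (w : 'M[R]_k.+1).
Hypothesis hw : in_assign w.

Notation cur r := (widen_ord (leqnSn k) r).
Notation nxt r := (lift ord0 r).

Definition succ_mass (i j : 'I_k.+1) : R :=
  \sum_(r < k) w i (cur r) * w j (nxt r).

(* total mass of the (impossible for permutations) self-successions *)
Definition self_mass : R := \sum_(i < k.+1) succ_mass i i.

(* The completion of w to a point of Q1; the self-mass is put on the
   off-diagonal entry (1, m), which exists as soon as self_mass can be
   nonzero. *)
Definition extension : 'M[R]_k.+2 := \matrix_(x, z)
  match unlift ord0 x, unlift ord0 z with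
  | None, None => 0
  | None, Some j => w j ord0
  | Some i, None => w i ord_max
  | Some i, Some j =>
      succ_mass i j + (if (i == ord0) && (j == ord_max) then self_mass else 0)
  end.

Lemma succ_mass_ge0 i j : 0 <= succ_mass i j.
Proof. by case: hw => _ _ hp; apply: sumr_ge0 => r _; apply: mulr_ge0. Qed.

Lemma self_mass_ge0 : 0 <= self_mass.
Proof. by apply: sumr_ge0 => i _; apply: succ_mass_ge0. Qed.

(* With a single position there are no successions at all. *)
Lemma self_mass0 : k = 0%N -> self_mass = 0.
Proof.
by move=> k0; apply: big1 => i _; apply: big1 => r; have := ltn_ord r; rewrite {2}k0.
Qed.

Lemma succ_mass_ge_pair i j r : w i (cur r) * w j (nxt r) <= succ_mass i j.
Proof.
case: hw => _ _ hp; rewrite /succ_mass (bigD1 r) //= lerDl.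
by apply: sumr_ge0 => s _; apply: mulr_ge0.
Qed.

(* Column sums collapse the successor index. *)
Lemma row_succ_mass i : \sum_(j < k.+1) succ_mass i j = \sum_(r < k) w i (cur r).
Proof.
case: hw => _ hcol _; rewrite exchange_big; apply: eq_bigr => r _.
by rewrite -mulr_sumr hcol mulr1.
Qed.

Lemma sum_offdiag_succ_mass :
  \sum_(i < k.+1) \sum_(j < k.+1 | j != i) succ_mass i j = k%:R - self_mass.
Proof.
case: hw => _ hcol _.
have -> : \sum_(i < k.+1) \sum_(j < k.+1 | j != i) succ_mass i j
          = \sum_(i < k.+1) (\sum_(r < k) w i (cur r) - succ_mass i i).
  by apply: eq_bigr => i _; rewrite -row_succ_mass [X in _ = X - _](bigD1 i) //= addrC addrK.
rewrite sumrB exchange_big (eq_bigr (fun=> 1)) => [|r _]; last exact: hcol.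
by rewrite sumr_const card_ord.
Qed.

Lemma extension_node i j :
  extension (node i) (node j)
  = succ_mass i j + (if (i == ord0) && (j == ord_max) then self_mass else 0).
Proof. by rewrite mxE /node !liftK. Qed.

Lemma extension_in_Q1 : in_Q1 w extension.
Proof.
have u0 : unlift ord0 (ord0 : 'I_k.+2) = None by rewrite unlift_none.
have corr_ge0 (b : bool) : 0 <= (if b then self_mass else 0).
  by case: b; rewrite ?self_mass_ge0.
split=> //; split.
- by move=> i r r0; rewrite mxE /node liftK u0; congr (w i _); apply: val_inj.
- by move=> i r rm; rewrite mxE /node liftK u0; congr (w i _); apply: val_inj.
- move=> i j r s _ hs; rewrite extension_node.
  have rk : (r < k)%N by rewrite -ltnS -hs ltn_ord.
  have [t -> ->] : exists2 t : 'I_k, r = cur t & s = nxt t.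
    by exists (Ordinal rk); apply: val_inj.
  have := sum_sub1_le_mul (assign_entry_le1 i (cur t) hw)
                          (assign_entry_le1 j (nxt t) hw).
  have := succ_mass_ge_pair i j t.
  have := corr_ge0 ((i == ord0) && (j == ord_max)).
  lra.
- rewrite (eq_bigr _ (fun i _ => eq_bigr _ (fun j _ => extension_node i j))).
  rewrite (eq_bigr _ (fun i _ => big_split _ _ _ _ _)) big_split /=.
  rewrite sum_offdiag_succ_mass sum_offdiag_single.
  case: eqVneq => [/(congr1 val) /= k0|_]; last by rewrite subrK.
  by rewrite self_mass0 // subr0 addr0.
- move=> x z _; rewrite mxE.
  case: (unlift ord0 x) => [i|]; case: (unlift ord0 z) => [j|] //;
    try by case: hw => _ _; apply.
  exact: addr_ge0 (succ_mass_ge0 i j) (corr_ge0 _).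
Qed.

End Extension.

Lemma assign_extends_to_Q1 {R : realFieldType} {m : nat} {w : 'M[R]_m} :
  in_assign w -> exists y : 'M[R]_m.+1, in_Q1 w y.
Proof.
case: m w => [|k] w hw; last by exists (extension w); exact: extension_in_Q1.
exists 0; split=> //; split=> [[]//|[]//|[]//||a b]; last by rewrite mxE.
by rewrite big_ord0.
Qed.

Theorem lemma3 (R : realFieldType) (n : nat) (hn : (2 <= n)%N)
    (c w : 'M[R]_(n.-1)) (y : 'M[R]_((n.-1).+1)) :
  optimal_Q1 c w y <-> in_Q1 w y /\ optimal_assign c w.
Proof.
split=> [[hq hopt] | [hq [_ hopt]]].
- split=> //; split=> [|w' hw']; first by case: hq.
  have [y' hy'] := assign_extends_to_Q1 hw'.
  exact: hopt hy'.
- by split=> // w' y' [hw' _]; apply: hopt.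
Qed.
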